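(* For every positive integer $t$, $$ma_t(t)=\frac12+\frac{\lfloor (t-1)/2\rfloor}{2t}.$$
   Context: A voter matrix with $t$ topics is a matrix $V\in\{Y,N\}^{n\times t}$ for some positive integer $n$ (rows are voters), subject to the standing assumption that in every column the number of entries $Y$ is at least the number of entries $N$. $\mathcal{V}_t$ is the set of all voter matrices with $t$ topics and any number of voters. A proposal is a vector $p\in\{Y,N\}^t$. A voter $v$ supports $p$ if the Hamming distance between $v$ and $p$ is at most $t/2$; $p$ is supported by $V$ if at least $n/2$ rows of $V$ support $p$. $md_V$ is the maximum number of entries $Y$ of a proposal supported by $V$. $m_V$ denotes the fraction of entries $Y$ among all $nt$ entries of $V$ (the average majority). For an integer $w$ with $\lceil (t+1)/2\rceil\le w\le t$, $ma_t(w)$ is the supremum of $m_V$ over all $V\in\mathcal{V}_t$ with $md_V<w$, with the convention that $ma_t(w)=\frac12$ if no such $V$ exists. *)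

From HB Require Import structures.
From mathcomp Require Import all_boot all_order all_algebra.
From mathcomp Require Import boolp classical_sets reals.
Set Implicit Arguments. Unset Strict Implicit. Unset Printing Implicit Defensive.
Import Order.TTheory GRing.Theory Num.Theory.
Local Open Scope classical_set_scope.

(* Entries: true = Y, false = N.  A voter matrix with t topics and n voters
   is V : 'M[bool]_(n,t) with n positive and, in every column, #Y >= #N,
   i.e. n <= 2 * #Y. *)
Definition voter_matrix (n t : nat) (V : 'M[bool]_(n, t)) : Prop :=
  (0 < n)%N /\ forall j : 'I_t, (n <= 2 * #|[set i : 'I_n | V i j]|)%N.

Definition proposal (t : nat) := {ffun 'I_t -> bool}.

Definition hamming (n t : nat) (V : 'M[bool]_(n, t)) (i : 'I_n) (p : proposal t) : nat :=
  #|[set j : 'I_t | V i j != p j]|.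

Definition supports (n t : nat) (V : 'M[bool]_(n, t)) (i : 'I_n) (p : proposal t) : bool :=
  (2 * hamming V i p <= t)%N.

Definition supported (n t : nat) (V : 'M[bool]_(n, t)) (p : proposal t) : bool :=
  (n <= 2 * #|[set i : 'I_n | supports V i p]|)%N.

Definition numY (t : nat) (p : proposal t) : nat := #|[set j : 'I_t | p j]|.

Definition md (n t : nat) (V : 'M[bool]_(n, t)) : nat :=
  \max_(p : proposal t | supported V p) numY p.

Definition mV (R : realType) (n t : nat) (V : 'M[bool]_(n, t)) : R :=
  ((#|[set ij : 'I_n * 'I_t | V ij.1 ij.2]|)%:R / (n * t)%:R)%R.
Arguments mV R {n t} V.

Definition ma_set (R : realType) (t w : nat) : set R :=
  [set x | exists (n : nat) (V : 'M[bool]_(n, t)),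
      voter_matrix V /\ (md V < w)%N /\ x = mV R V].
Arguments ma_set : clear implicits.

Definition ma (R : realType) (t w : nat) : R :=
  if `[< ma_set R t w !=set0 >] then sup (ma_set R t w) else (2^-1)%R.
Arguments ma : clear implicits.

From HB Require Import structures.
From mathcomp Require Import all_boot all_order all_algebra.
From mathcomp Require Import boolp classical_sets reals.
From mathcomp Require Import zify ring lra.
Import Order.TTheory GRing.Theory Num.Theory.
Set Implicit Arguments. Unset Strict Implicit.
Local Open Scope ring_scope.

(* A proposal with t Y's must be the all-Y proposal, so md_V < t says that
   fewer than half of the voters are within distance t/2 of it; every other
   voter has at most k = floor((t-1)/2) Y's, whence m_V < 1/2 + k/(2t).  If
   k = 0 no voter matrix qualifies at all, since the voters with a Y in the
   first column all support the all-Y proposal.  If k > 0 the bound is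
   approached by 2m+1 voters, m of them voting Y everywhere and m+1 voting Y
   on cyclically shifted windows of k topics, with
   m_V = ((m+1)k + mt) / ((2m+1)t). *)

Lemma card_classicE (T : finType) (P : pred T) :
  #|[set x | P x]%classic| = #|[set x | P x]|.
Proof. by apply: eq_card => x; rewrite inE /in_mem /= /in_set asboolb. Qed.

Lemma geq_half_pred (r t : nat) : (0 < t)%N -> (r <= t.-1./2)%N = (2 * r < t)%N.
Proof. by move=> t0; rewrite geq_half_double -muln2; lia. Qed.

Definition allY (t : nat) : proposal t := [ffun=> true].

Lemma numY_allY (t : nat) : numY (allY t) = t.
Proof.
rewrite /numY card_classicE -[RHS]card_ord -cardsT.
by apply: eq_card => j; rewrite !inE ffunE.
Qed.

Lemma numY_le (t : nat) (p : proposal t) : (numY p <= t)%N.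
Proof. by rewrite /numY card_classicE (leq_trans (max_card _)) ?card_ord. Qed.

Lemma numY_eq_allY (t : nat) (p : proposal t) : numY p = t -> p = allY t.
Proof.
move=> numYt; have allp : [set j | p j] = [set: 'I_t].
  apply/eqP; rewrite eqEcard finset.subsetT cardsT card_ord -[X in (X <= _)%N]numYt /numY.
  by rewrite /= card_classicE.
by apply/ffunP => j; have := finset.in_setT j; rewrite -allp inE ffunE.
Qed.

Lemma minority_weighted_lt (a b x y : nat) : (a < b)%N -> (y < x)%N ->
  (2 * (a * x + b * y) < (a + b) * (x + y))%N.
Proof.
move=> ab yx; have : (a * (x - y) < b * (x - y))%N by rewrite ltn_pmul2r ?subn_gt0.
rewrite !mulnBr => gap.
have := leq_mul (leqnn a) (ltnW yx); have := leq_mul (leqnn b) (ltnW yx).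
rewrite !mulnDl !mulnDr; lia.
Qed.

Section VoterMatrix.
Variables (n t : nat) (V : 'M[bool]_(n, t)).

Definition rowY (i : 'I_n) : nat := #|[set j | V i j]|.

Definition total : nat := #|[set ij : 'I_n * 'I_t | V ij.1 ij.2]|.

Lemma rowY_le i : (rowY i <= t)%N.
Proof. by rewrite /rowY (leq_trans (max_card _)) ?card_ord. Qed.

Lemma hamming_allY i : hamming V i (allY t) = (t - rowY i)%N.
Proof.
rewrite /hamming /rowY card_classicE.
have := cardsC [set j | V i j]; rewrite card_ord.
have -> : ~: [set j | V i j] = [set j | V i j != allY t j].
  by apply/setP => j; rewrite !inE ffunE; case: (V i j).
lia.
Qed.

Lemma supports_allY i : supports V i (allY t) = (t <= 2 * rowY i)%N.
Proof. by rewrite /supports hamming_allY; have := rowY_le i; lia. Qed.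

Lemma rowY_unsupported i : (0 < t)%N -> ~~ supports V i (allY t) ->
  (rowY i <= t.-1./2)%N.
Proof. by move=> t0; rewrite supports_allY geq_half_pred // ltnNge. Qed.

Lemma total_sum : total = (\sum_i rowY i)%N.
Proof.
rewrite /total -sum1_card (eq_bigl (fun ij : 'I_n * 'I_t => V ij.1 ij.2)).
  rewrite -(pair_big_dep xpredT (fun i j => V i j) (fun _ _ => 1%N)) /=.
  by apply: eq_bigr => i _; rewrite /rowY -sum1_card; apply: eq_bigl => j; rewrite inE.
by move=> ij; rewrite inE.
Qed.

Lemma md_lt_size : (0 < t)%N -> (md V < t)%N = ~~ supported V (allY t).
Proof.
move=> t0; apply/idP/idP => [md_lt|unsupp].
  apply: contraTN md_lt => supp; rewrite -leqNgt -{1}(numY_allY t).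
  exact: leq_bigmax_cond.
suff : (md V <= t.-1)%N by lia.
apply/bigmax_leqP => p supp.
have := numY_le p; rewrite leq_eqVlt => /orP[/eqP/numY_eq_allY pY|]; last lia.
by move: supp; rewrite pY (negbTE unsupp).
Qed.

Let supporters := [set i | supports V i (allY t)].

Lemma supporters_minority : ~~ supported V (allY t) -> (2 * #|supporters| < n)%N.
Proof. by rewrite /supported card_classicE -ltnNge. Qed.

Lemma total_unsupported : (0 < t)%N -> ~~ supported V (allY t) ->
  (2 * total < n * (t + t.-1./2))%N.
Proof.
move=> t0 /supporters_minority minority.
have card_split := cardsC supporters; rewrite card_ord in card_split.
have supp_sum : (\sum_(i in supporters) rowY i <= #|supporters| * t)%N.
  by rewrite -sum_nat_const; apply: leq_sum => i _; exact: rowY_le.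
have others_sum : (\sum_(i in ~: supporters) rowY i <= #|~: supporters| * t.-1./2)%N.
  rewrite -sum_nat_const; apply: leq_sum => i.
  by rewrite !inE => /(rowY_unsupported t0).
have total_le : (total <= #|supporters| * t + #|~: supporters| * t.-1./2)%N.
  rewrite total_sum (bigID (mem supporters)) /=.
  rewrite [X in (_ + X)%N](eq_bigl (fun i => i \in ~: supporters)).
    exact: leq_add.
  by move=> i; rewrite !inE.
rewrite -card_split; apply: leq_ltn_trans (minority_weighted_lt _ _).
- by rewrite leq_mul2l total_le orbT.
- lia.
- by rewrite ltn_half_double -muln2; lia.
Qed.

Lemma supported_allY_small : (0 < t)%N -> t.-1./2 = 0%N -> voter_matrix V ->
  supported V (allY t).
Proof.
move=> t0 k0 [_ /(_ (Ordinal t0))]; rewrite card_classicE => col0.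
rewrite /supported card_classicE; apply: (leq_trans col0); rewrite leq_mul2l.
apply/orP; right; apply/subset_leq_card/fintype.subsetP => i.
rewrite !inE => Vi0; apply: contraT => /(rowY_unsupported t0).
rewrite k0 leqn0 cards_eq0 => /eqP/setP/(_ (Ordinal t0)).
by rewrite !inE Vi0.
Qed.

Lemma mV_lt_unsupported (R : realType) : (0 < t)%N -> voter_matrix V ->
  ~~ supported V (allY t) -> mV R V < 2^-1 + (t.-1./2)%:R / (2 * t)%:R.
Proof.
move=> t0 [n0 _] /(total_unsupported t0).
rewrite /mV card_classicE -/total.
move: total (t.-1./2) => tot k lt_tot.
have nt0 : 0 < (n * t)%:R :> R by rewrite ltr0n muln_gt0 n0.
have -> : 2^-1 + k%:R / (2 * t)%:R = (n * (t + k))%:R / 2 / (n * t)%:R :> R.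
  have tn0 : t%:R != 0 :> R by rewrite pnatr_eq0 -lt0n.
  have nn0 : n%:R != 0 :> R by rewrite pnatr_eq0 -lt0n.
  by rewrite !natrM natrD; field; rewrite tn0 nn0.
rewrite ltr_pM2r ?invr_gt0 // ltr_pdivlMr ?ltr0n // -[2 : R]/(2%:R) -natrM ltr_nat.
lia.
Qed.

End VoterMatrix.

Lemma card_ord_lt (n k : nat) : (k <= n)%N -> #|[set i : 'I_n | (i < k)%N]| = k.
Proof.
move=> kn; rewrite -sum1_card (eq_bigl (fun i : 'I_n => (i < k)%N)) => [|i].
  by rewrite -(big_ord_widen _ (fun=> 1%N) kn) sum1_card card_ord.
by rewrite inE.
Qed.

Section CyclicVotes.
Variables (s m : nat).

Let half_le_size : (s./2 <= s.+1)%N.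
Proof. by rewrite -divn2 (leq_trans (leq_div _ _)). Qed.

Definition cyclic_votes : 'M[bool]_((2 * m).+1, s.+1) :=
  \matrix_(i, j) if (i <= m)%N then (((j + inZp i)%R : 'I_s.+1) < s./2)%N else true.

Lemma rowY_cyclic i : rowY cyclic_votes i = if (i <= m)%N then s./2 else s.+1.
Proof.
rewrite /rowY; case: ifP => im.
  have -> : [set j | cyclic_votes i j] =
            (fun j => j + inZp i)%R @^-1: [set j : 'I_s.+1 | (j < s./2)%N].
    by apply/setP => j; rewrite !inE mxE im.
  rewrite card_preimset; last exact: addIr.
  exact: card_ord_lt.
rewrite -[RHS]card_ord -cardsT; apply: eq_card => j.
by rewrite !inE mxE im.
Qed.

Lemma card_lower_rows : #|[set i : 'I_(2 * m).+1 | (i <= m)%N]| = m.+1.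
Proof. by apply: (@card_ord_lt _ m.+1); lia. Qed.

Lemma card_upper_rows : #|[set i : 'I_(2 * m).+1 | ~~ (i <= m)%N]| = m.
Proof.
have := cardsC [set i : 'I_(2 * m).+1 | (i <= m)%N].
rewrite card_lower_rows card_ord.
have -> : ~: [set i : 'I_(2 * m).+1 | (i <= m)%N] = [set i : 'I_(2 * m).+1 | ~~ (i <= m)%N].
  by apply/setP => i; rewrite !inE.
lia.
Qed.

Lemma total_cyclic : total cyclic_votes = (m.+1 * s./2 + m * s.+1)%N.
Proof.
rewrite total_sum (bigID (fun i : 'I_(2 * m).+1 => (i <= m)%N)) /=.
under eq_bigr => i im do rewrite rowY_cyclic im.
under [X in (_ + X)%N]eq_bigr => i im do rewrite rowY_cyclic (negbTE im).
by rewrite !sum_nat_cond_const card_lower_rows card_upper_rows.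
Qed.

Lemma cyclic_unsupported : ~~ supported cyclic_votes (allY s.+1).
Proof.
rewrite /supported card_classicE -ltnNge.
have upper : [set i | supports cyclic_votes i (allY s.+1)] \subset
             [set i : 'I_(2 * m).+1 | ~~ (i <= m)%N].
  apply/fintype.subsetP => i; rewrite !inE supports_allY rowY_cyclic.
  by apply: contraTN => ->; rewrite -ltnNge -geq_half_pred.
by rewrite (leq_ltn_trans (leq_mul (leqnn 2) (subset_leq_card upper))) ?card_upper_rows.
Qed.

Lemma cyclic_voter_matrix : (0 < s./2)%N -> (s <= m)%N -> voter_matrix cyclic_votes.
Proof.
move=> k_gt0 sm; split => // j; rewrite card_classicE.
have i0_lt : (nat_of_ord (- j)%R < (2 * m).+1)%N by have := ltn_ord (- j)%R; lia.
pose i0 : 'I_(2 * m).+1 := Ordinal i0_lt.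
have i0_low : (i0 <= m)%N by have := ltn_ord (- j)%R; rewrite /=; lia.
have sub : i0 |: [set i : 'I_(2 * m).+1 | ~~ (i <= m)%N] \subset [set i | cyclic_votes i j].
  apply/fintype.subsetP => i; rewrite !inE mxE => /orP [/eqP -> | /negbTE -> //].
  by rewrite i0_low (valZpK (- j)%R : inZp i0 = (- j)%R) subrr.
have := subset_leq_card sub; rewrite cardsU1 card_upper_rows inE negbK i0_low.
lia.
Qed.

Lemma mV_cyclic_ge (R : realType) :
  2^-1 + (s./2)%:R / (2 * s.+1)%:R - (m.+1%:R)^-1 <= mV R cyclic_votes.
Proof.
rewrite lerBlDr -lerBlDl /mV card_classicE -/(total cyclic_votes) total_cyclic.
move: s./2 s.+1 (ltn0Sn s) half_le_size => k t t0 kt.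
have tn0 : t%:R != 0 :> R by rewrite pnatr_eq0 -lt0n.
have n0 : (2 * m).+1%:R != 0 :> R by rewrite pnatr_eq0.
have m0 : m.+1%:R != 0 :> R by rewrite pnatr_eq0.
have -> : 2^-1 + k%:R / (2 * t)%:R - (m.+1 * k + m * t)%:R / ((2 * m).+1 * t)%:R
   = (t%:R - k%:R) / (2 * (2 * m).+1%:R * t%:R) :> R.
  rewrite !natrM !natrD !natrM /=.
  rewrite -(natr1 (2 * m)) -(natr1 m) natrM in n0 m0 *.
  by field; rewrite tn0 n0.
have denom_gt0 : 0 < 2 * (2 * m).+1%:R * t%:R :> R by rewrite !mulr_gt0 ?ltr0n.
rewrite ler_pdivrMr // [leRHS]mulrC ler_pdivlMr ?ltr0n //.
have : k%:R <= t%:R :> R by rewrite ler_nat.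
have : 0 <= k%:R :> R by rewrite ler0n.
have : 0 <= m%:R :> R by rewrite ler0n.
rewrite -(natr1 (2 * m)) -(natr1 m) natrM.
nra.
Qed.

End CyclicVotes.

Lemma sup_eq_of_approx (R : realType) (E : set R) (b : R) (N : nat) :
  (forall x, E x -> x <= b) ->
  (forall m, (N <= m)%N -> exists2 x, E x & b - (m.+1%:R)^-1 <= x) ->
  sup E = b.
Proof.
move=> le_b approx.
have [x0 Ex0 _] := approx N (leqnn N).
apply/eqP; rewrite eq_le ge_sup //=; last by exists x0.
rewrite leNgt; apply/negP => /ltr_add_invr [k lt_b].
have [x Ex le_x] := approx (maxn N k) (leq_maxl _ _).
have x_le : x <= sup E by exact: ub_le_sup (ex_intro _ b le_b) _ Ex.
have inv_le : ((maxn N k).+1%:R)^-1 <= (k.+1%:R)^-1 :> R.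
  by rewrite lef_pV2 ?posrE ?ltr0n // ler_nat ltnS leq_maxr.
move: le_x; rewrite lerBlDr => /le_trans/(_ (lerD x_le inv_le)) b_le.
by have := le_lt_trans b_le lt_b; rewrite ltxx.
Qed.

Theorem lemma5p8 (R : realType) (t : nat) : (0 < t)%N ->
  ma R t t = 2^-1 + ((t.-1)./2)%:R / (2 * t)%:R.
Proof.
case: t => // s _; rewrite /ma /=.
have below x : ma_set R s.+1 s.+1 x -> x <= 2^-1 + (s./2)%:R / (2 * s.+1)%:R.
  move=> [n [V [vm [md_lt ->]]]]; apply/ltW/mV_lt_unsupported => //.
  by rewrite -md_lt_size.
have [k0 | k_gt0] := posnP s./2.
  have -> : `[< (ma_set R s.+1 s.+1 !=set0)%classic >] = false.
    apply/asboolPn => -[x [n [V [vm [md_lt _]]]]].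
    by move: md_lt; rewrite md_lt_size // (@supported_allY_small _ s.+1 _ isT k0 vm).
  by rewrite k0 mul0r addr0.
have cyclic_in m : (s <= m)%N -> ma_set R s.+1 s.+1 (mV R (cyclic_votes s m)).
  move=> sm; exists (2 * m).+1, (cyclic_votes s m).
  by rewrite md_lt_size // cyclic_unsupported; split => //; exact: cyclic_voter_matrix.
rewrite asboolT; last by exists (mV R (cyclic_votes s s)); exact: cyclic_in.
apply: (sup_eq_of_approx (N := s)) => // m sm.
by exists (mV R (cyclic_votes s m)); [exact: cyclic_in | exact: mV_cyclic_ge].
Qed.
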